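(* Let $\lambda\ge 0$ and $\lambda_1,\dots,\lambda_M>0$. Suppose $g_1,\dots,g_M$ are $C^1$ functions on $[0,P)\times[0,\infty)$ (for some $P>0$), and write $t(p,v)=\sum_{\gamma=1}^M g_\gamma(p,v)$. Assume they satisfy: - $\lambda+t(p,v)>0$ on the whole domain; - the system of PDEs $$\frac{\partial g_\rho}{\partial p}(p,v)=\frac{1}{\lambda+t(p,v)}\,\frac{\partial g_\rho}{\partial v}(p,v),\qquad \rho=1,\dots,M;$$ - the initial conditions $g_\rho(0,v)=\big(\tfrac{1}{\lambda_\rho}+v\big)^{-1}$. Then for all $(p,v)$ in the domain and all $\rho$, $$g_\rho(p,v)=\Big(\frac{1}{\lambda_\rho}+v+\frac{p}{\lambda+\sum_{\gamma=1}^M g_\gamma(p,v)}\Big)^{-1}.$$ In particular, $$t(p,v)=\sum_\rho\Big(\tfrac{1}{\lambda_\rho}+v+\tfrac{p}{\lambda+t(p,v)}\Big)^{-1}.$$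
   Context: This PDE is the continuous approximation to the dataset-averaged diagonal entries $g_\rho(p,v)=\langle\tilde{\mathbf{G}}(p,v)_{\rho\rho}\rangle$, where $$\tilde{\mathbf{G}}(p,v)=\Big(\tfrac{1}{\lambda}\mathbf{\Phi}\mathbf{\Phi}^\top+\mathbf{\Lambda}^{-1}+v\mathbf{I}\Big)^{-1},$$ $\mathbf{\Phi}$ is the $M\times p$ matrix of kernel eigenfunctions evaluated at $p$ samples, and $\mathbf{\Lambda}={\rm diag}(\lambda_\rho)$. The number of samples $p$ is treated as a continuous variable. *)

From Stdlib Require Import Reals Lra List.
Import ListNotations.
Open Scope R_scope.

Definition in_dom (P p v : R) : Prop := 0 <= p < P /\ 0 <= v.

(* Finite sum over indices 0..M-1 (index rho = 1..M in the paper is rho-1 here). *)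
Definition sumM (M : nat) (f : nat -> R) : R :=
  fold_right Rplus 0 (map f (seq 0 M)).

Definition tfun (M : nat) (g : nat -> R -> R -> R) (p v : R) : R :=
  sumM M (fun r => g r p v).

(* Partial derivative in p at (p,v), taken within the domain (one-sided at the boundary). *)
Definition has_pderiv_p (P : R) (f : R -> R -> R) (p v l : R) : Prop :=
  limit1_in (fun h => (f (p + h) v - f p v) / h)
            (fun h => h <> 0 /\ in_dom P (p + h) v) l 0.

Definition has_pderiv_v (P : R) (f : R -> R -> R) (p v l : R) : Prop :=
  limit1_in (fun h => (f p (v + h) - f p v) / h)
            (fun h => h <> 0 /\ in_dom P p (v + h)) l 0.

Definition cont_on_dom (P : R) (f : R -> R -> R) : Prop :=
  forall p v, in_dom P p v ->
  forall eps, 0 < eps -> exists delta, 0 < delta /\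
    forall p' v', in_dom P p' v' -> Rabs (p' - p) < delta -> Rabs (v' - v) < delta ->
      Rabs (f p' v' - f p v) < eps.

Definition C1_on (P : R) (f fp fv : R -> R -> R) : Prop :=
  cont_on_dom P f /\ cont_on_dom P fp /\ cont_on_dom P fv /\
  (forall p v, in_dom P p v -> has_pderiv_p P f p v (fp p v) /\ has_pderiv_v P f p v (fv p v)).

(* Fix (p0, v0), put t0 = t(p0, v0) and c = 1 / (lam + t0), and follow the line
   s |-> (s, v0 + c (p0 - s)) back from p = p0 to p = 0.  By the PDE, phi(s) = t
   along the line solves the linear equation phi' = - K (phi - t0) with K
   continuous and phi(p0) = t0, so phi = t0 throughout (Gronwall).  The line is
   therefore a characteristic: each g_rho has derivative
   (1 / (lam + phi) - c) dg_rho/dv = 0 along it, whence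
   g_rho(p0, v0) = g_rho(0, v0 + c p0) = 1 / (1 / lams_rho + v0 + c p0). *)

From Stdlib Require Import Reals Lra List.
From Coquelicot Require Import Coquelicot.
Open Scope R_scope.

Definition clamp (a b x : R) : R := Rmax a (Rmin b x).

Lemma clamp_in a b x : a <= b -> a <= clamp a b x <= b.
Proof. intros; unfold clamp, Rmax, Rmin; repeat destruct Rle_dec; lra. Qed.

Lemma clamp_id a b x : a <= x <= b -> clamp a b x = x.
Proof. intros; unfold clamp, Rmax, Rmin; repeat destruct Rle_dec; lra. Qed.

Lemma Rabs_clamp_le a b x y : a <= b -> Rabs (clamp a b y - clamp a b x) <= Rabs (y - x).
Proof.
  intros; unfold clamp, Rmax, Rmin; repeat destruct Rle_dec; unfold Rabs;
    repeat destruct Rcase_abs; lra.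
Qed.

(* Continuity on [a, b] relative to [a, b], encoded as continuity on R of the
   extension of [F] that is constant outside [a, b]. *)
Definition continuous_on_segment (a b : R) (F : R -> R) : Prop :=
  forall x, continuity_pt (fun y => F (clamp a b y)) x.

Lemma continuous_on_segment_intro a b F : a <= b ->
  (forall x, a <= x <= b -> forall eps, 0 < eps -> exists d, 0 < d /\
     forall y, a <= y <= b -> Rabs (y - x) < d -> Rabs (F y - F x) < eps) ->
  continuous_on_segment a b F.
Proof.
  intros Hab HF x eps Heps.
  destruct (HF (clamp a b x) (clamp_in a b x Hab) eps Heps) as [d [Hd H]].
  exists d; split; [lra|]; intros y [_ Hy]; simpl in *; unfold R_dist in *.
  apply H; [now apply clamp_in|].
  pose proof (Rabs_clamp_le a b x y Hab); lra.
Qed.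

Lemma continuity_pt_clamp a b x : a <= b -> continuity_pt (clamp a b) x.
Proof.
  intro Hab; apply (continuous_on_segment_intro a b id Hab).
  intros y _ eps Heps; exists eps; split; [lra|]; intros; unfold id; lra.
Qed.

Lemma continuous_on_subsegment a' b' a b F : a' <= a -> a <= b -> b <= b' ->
  continuous_on_segment a' b' F -> continuous_on_segment a b F.
Proof.
  intros Ha Hab Hb HF x.
  apply continuity_pt_ext with (fun y => F (clamp a' b' (clamp a b y))).
  { intro y; rewrite (clamp_id a' b'); [easy|]; pose proof (clamp_in a b y Hab); lra. }
  apply (continuity_pt_comp (clamp a b) (fun y => F (clamp a' b' y))); auto.
  now apply continuity_pt_clamp.
Qed.

Lemma derivable_pt_lim_eq f x l l' :
  derivable_pt_lim f x l -> l = l' -> derivable_pt_lim f x l'.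
Proof. now intros H <-. Qed.

Lemma Rle_of_deriv_nonneg a b F F' : a <= b -> continuous_on_segment a b F ->
  (forall x, a < x < b -> derivable_pt_lim F x (F' x)) ->
  (forall x, a < x < b -> 0 <= F' x) -> F a <= F b.
Proof.
  intros Hab HF HdF HF'.
  destruct (Req_dec a b) as [<-|Hne]; [lra|].
  set (Fc := fun y => F (clamp a b y)).
  assert (HdFc : forall x, a < x < b -> derivable_pt_lim Fc x (F' x)).
  { intros x Hx; apply (derivable_pt_lim_locally_ext F Fc x a b); auto.
    intros z Hz; unfold Fc; rewrite clamp_id; lra. }
  destruct (MVT Fc id a b (fun x Hx => exist _ _ (HdFc x Hx))
              (fun x _ => derivable_pt_id x)) as [x [Hx Hmvt]]; [lra|auto|..].
  { intros; apply derivable_continuous_pt, derivable_pt_id. }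
  rewrite (derive_pt_eq_0 _ _ _ _ (HdFc x Hx)), derive_pt_id in Hmvt.
  unfold Fc, id in Hmvt; rewrite !clamp_id in Hmvt by lra.
  assert (0 <= (b - a) * F' x) by (apply Rmult_le_pos; [lra | apply HF'; lra]).
  lra.
Qed.

Lemma eq_of_deriv_zero a b F : a <= b -> continuous_on_segment a b F ->
  (forall x, a < x < b -> derivable_pt_lim F x 0) -> F a = F b.
Proof.
  intros Hab HF HdF; apply Rle_antisym.
  - apply (Rle_of_deriv_nonneg a b F (fun _ => 0)); auto; intros; lra.
  - enough (- F a <= - F b) by lra.
    apply (Rle_of_deriv_nonneg a b (fun x => - F x) (fun _ => - 0)); try (intros; lra).
    + intro x; now apply continuity_pt_opp.
    + intros x Hx; now apply derivable_pt_lim_opp, HdF.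
Qed.

(* Backward uniqueness for [u' = k u]: [u ^ 2 * exp (- 2 m x)] is nondecreasing
   once [m] is a lower bound of [k]. *)
Lemma linear_ode_eq0 a b u k : a <= b ->
  continuous_on_segment a b u -> continuous_on_segment a b k ->
  (forall x, a < x < b -> derivable_pt_lim u x (k x * u x)) ->
  u b = 0 -> forall x, a <= x <= b -> u x = 0.
Proof.
  intros Hab Hu Hk Hdu Hub x Hx.
  destruct (continuity_ab_min (fun y => k (clamp a b y)) a b Hab (fun y _ => Hk y))
    as [xm [Hmin Hxm]].
  set (m := k (clamp a b xm)).
  assert (Hkm : forall y, a <= y <= b -> m <= k y).
  { intros y Hy; pose proof (Hmin y Hy); now rewrite (clamp_id a b y) in * by lra. }
  set (h := fun y => u y * u y * exp (- (2 * m) * y)).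
  assert (Hh : h x <= h b).
  { apply (Rle_of_deriv_nonneg x b h
             (fun y => 2 * (u y * u y) * exp (- (2 * m) * y) * (k y - m))); try lra.
    - apply (continuous_on_subsegment a b); try lra.
      intro y; unfold h.
      apply continuity_pt_mult; [apply continuity_pt_mult; apply Hu|].
      apply (continuity_pt_comp (fun z => - (2 * m) * clamp a b z) exp).
      + apply continuity_pt_mult; [apply continuity_pt_const; now intros ??|].
        now apply continuity_pt_clamp.
      + apply derivable_continuous_pt, derivable_pt_exp.
    - intros y Hy.
      eapply derivable_pt_lim_eq.
      + apply derivable_pt_lim_mult; [apply derivable_pt_lim_mult; apply Hdu; lra|].
        apply (derivable_pt_lim_comp (fun z => - (2 * m) * z) exp).
        * apply derivable_pt_lim_scal, derivable_pt_lim_id.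
        * apply derivable_pt_lim_exp.
      + cbv beta; ring.
    - intros y Hy; apply Rmult_le_pos; [apply Rmult_le_pos|].
      + pose proof (Rle_0_sqr (u y)); unfold Rsqr in *; lra.
      + now left; apply exp_pos.
      + pose proof (Hkm y ltac:(lra)); lra. }
  unfold h in Hh; rewrite Hub, !Rmult_0_l in Hh.
  pose proof (exp_pos (- (2 * m) * x)).
  assert (Hsq : u x * u x = 0) by nra.
  now apply Rmult_integral in Hsq as [|].
Qed.

Lemma sumM_S M f : sumM (S M) f = sumM M f + f M.
Proof.
  unfold sumM; rewrite seq_S, map_app, fold_right_app; simpl.
  generalize (f M); induction (map f (seq 0 M)) as [|y l IH]; intro z; simpl; [ring|].
  rewrite IH; ring.
Qed.

Lemma sumM_ext M f g : (forall r, (r < M)%nat -> f r = g r) -> sumM M f = sumM M g.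
Proof. induction M; intros H; [easy|]; rewrite !sumM_S, IHM, H; auto. Qed.

Lemma sumM_scal_l M x f : sumM M (fun r => x * f r) = x * sumM M f.
Proof. induction M; [unfold sumM; simpl; ring|]; rewrite !sumM_S, IHM; ring. Qed.

Lemma derivable_pt_lim_sumM M (F F' : nat -> R -> R) x :
  (forall r, (r < M)%nat -> derivable_pt_lim (F r) x (F' r x)) ->
  derivable_pt_lim (fun y => sumM M (fun r => F r y)) x (sumM M (fun r => F' r x)).
Proof.
  induction M; intros H.
  - apply derivable_pt_lim_const.
  - rewrite sumM_S.
    apply (derivable_pt_lim_ext (fun y => sumM M (fun r => F r y) + F M y));
      [intro; now rewrite sumM_S|].
    apply derivable_pt_lim_plus; auto.
Qed.

Lemma continuity_pt_sumM M (F : nat -> R -> R) x :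
  (forall r, (r < M)%nat -> continuity_pt (F r) x) ->
  continuity_pt (fun y => sumM M (fun r => F r y)) x.
Proof.
  induction M; intros H.
  - apply continuity_pt_const; now intros ??.
  - apply continuity_pt_ext with (fun y => sumM M (fun r => F r y) + F M y);
      [intro; now rewrite sumM_S|].
    apply continuity_pt_plus; auto.
Qed.

Lemma derivable_pt_lim_of_has_pderiv_p P f p v l : 0 < p < P -> 0 <= v ->
  has_pderiv_p P f p v l -> derivable_pt_lim (fun x => f x v) p l.
Proof.
  intros Hp Hv H eps Heps; destruct (H eps Heps) as [alp [Halp H1]].
  simpl in H1; unfold R_dist in H1.
  assert (Hm : 0 < Rmin alp (Rmin p (P - p))) by (repeat apply Rmin_pos; lra).
  exists (mkposreal _ Hm); intros h Hh0 Hh; simpl in Hh.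
  pose proof (Rmin_l alp (Rmin p (P - p))); pose proof (Rmin_r alp (Rmin p (P - p))).
  pose proof (Rmin_l p (P - p)); pose proof (Rmin_r p (P - p)).
  apply H1; split.
  - split; [easy|]; unfold in_dom; revert Hh; unfold Rabs; destruct Rcase_abs; lra.
  - rewrite Rminus_0_r; lra.
Qed.

Lemma pquot_near_pderiv_p P f fp fv s w : C1_on P f fp fv -> 0 < s < P -> 0 <= w ->
  forall eps, 0 < eps -> exists d, 0 < d /\ forall h w', h <> 0 -> Rabs h < d ->
    0 <= w' -> Rabs (w' - w) < d -> Rabs ((f (s + h) w' - f s w') / h - fp s w) < eps.
Proof.
  intros [_ [Hfp [_ Hd]]] Hs Hw eps Heps.
  destruct (Hfp s w (conj (conj (Rlt_le _ _ (proj1 Hs)) (proj2 Hs)) Hw) eps Heps)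
    as [d0 [Hd0 Hc]].
  assert (Hm : 0 < Rmin d0 (Rmin s (P - s))) by (repeat apply Rmin_pos; lra).
  exists (Rmin d0 (Rmin s (P - s))); split; [easy|]; intros h w' Hh0 Hh Hw' Hww'.
  pose proof (Rmin_l d0 (Rmin s (P - s))); pose proof (Rmin_r d0 (Rmin s (P - s))).
  pose proof (Rmin_l s (P - s)); pose proof (Rmin_r s (P - s)).
  assert (Hnear : forall z, Rabs (z - s) <= Rabs h -> 0 < z < P).
  { intros z Hz; revert Hz Hh; unfold Rabs; repeat destruct Rcase_abs; lra. }
  destruct (MVT_cor4 (fun x => f x w') (fun x => fp x w') s (Rabs h)) with (s + h)
    as [xi [Hmvt Hxi]].
  - intros z Hz; apply is_derive_Reals, derivable_pt_lim_of_has_pderiv_p with P;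
      [now apply Hnear | easy | apply Hd; unfold in_dom; pose proof (Hnear z Hz); lra].
  - replace (s + h - s) with h by ring; lra.
  - replace (s + h - s) with h in * by ring.
    rewrite Hmvt; replace (fp xi w' * h / h) with (fp xi w') by (field; easy).
    apply Hc; [unfold in_dom; pose proof (Hnear xi Hxi); lra | lra | lra].
Qed.

Lemma derivable_pt_lim_along_line P f fp fv a c s : C1_on P f fp fv ->
  0 < c -> 0 < s < P -> 0 < a - c * s ->
  derivable_pt_lim (fun s => f s (a - c * s)) s
    (fp s (a - c * s) - c * fv s (a - c * s)).
Proof.
  intros Hf Hc Hs Hw eps Heps; set (w := a - c * s) in *.
  destruct (pquot_near_pderiv_p P f fp fv s w Hf Hs (Rlt_le _ _ Hw) (eps / 2))
    as [d1 [Hd1 Hp]]; [lra|].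
  destruct Hf as [_ [_ [_ Hd]]].
  destruct (proj2 (Hd s w (conj (conj (Rlt_le _ _ (proj1 Hs)) (proj2 Hs)) (Rlt_le _ _ Hw)))
              (eps / (2 * c))) as [alp [Halp Hv]].
  { apply Rdiv_lt_0_compat; lra. }
  simpl in Hv; unfold R_dist in Hv.
  pose proof (Rmin_l d1 (Rmin w alp)); pose proof (Rmin_r d1 (Rmin w alp)).
  pose proof (Rmin_l w alp); pose proof (Rmin_r w alp).
  set (e := Rmin d1 (Rmin w alp)) in *.
  assert (He : 0 < e) by (repeat apply Rmin_pos; lra).
  assert (Hm : 0 < Rmin d1 (e / c)) by (apply Rmin_pos; [lra | apply Rdiv_lt_0_compat; lra]).
  exists (mkposreal _ Hm); intros h Hh0 Hh; simpl in Hh.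
  pose proof (Rmin_l d1 (e / c)); pose proof (Rmin_r d1 (e / c)).
  assert (Hch : Rabs (- c * h) < e).
  { rewrite Rabs_mult, Rabs_Ropp, (Rabs_right c) by lra.
    apply (Rmult_lt_compat_l c) in Hh; [|lra].
    enough (c * Rmin d1 (e / c) <= e) by lra.
    replace e with (c * (e / c)) at 2 by (field; lra).
    apply Rmult_le_compat_l; lra. }
  assert (Hch0 : - c * h <> 0) by (intro E; apply Rmult_integral in E; lra).
  assert (Hw' : 0 <= w + - c * h)
    by (revert Hch; unfold Rabs; destruct Rcase_abs; intros; lra).
  replace (a - c * (s + h)) with (w + - c * h) by (unfold w; ring).
  pose proof (Hp h (w + - c * h) Hh0 ltac:(lra) Hw'
                ltac:(replace (w + - c * h - w) with (- c * h) by ring; lra)) as HA.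
  assert (HB : Rabs ((f s (w + - c * h) - f s w) / (- c * h) - fv s w) < eps / (2 * c)).
  { apply Hv; split; [split; [easy | unfold in_dom; lra] | rewrite Rminus_0_r; lra]. }
  replace ((f (s + h) (w + - c * h) - f s w) / h - (fp s w - c * fv s w)) with
    (((f (s + h) (w + - c * h) - f s (w + - c * h)) / h - fp s w)
     + - c * ((f s (w + - c * h) - f s w) / (- c * h) - fv s w)) by (field; lra).
  eapply Rle_lt_trans; [apply Rabs_triang|].
  rewrite Rabs_mult, Rabs_Ropp, (Rabs_right c) by lra.
  apply (Rmult_lt_compat_l c) in HB; [|lra].
  replace (c * (eps / (2 * c))) with (eps / 2) in HB by (field; lra).
  lra.
Qed.

Section Characteristic.

Variables (M : nat) (lam P : R) (g gp gv : nat -> R -> R -> R).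
Hypothesis g_C1 : forall r, (r < M)%nat -> C1_on P (g r) (gp r) (gv r).
Hypothesis denom_pos : forall p v, in_dom P p v -> 0 < lam + tfun M g p v.
Hypothesis g_pde : forall r p v, (r < M)%nat -> in_dom P p v ->
  gp r p v = / (lam + tfun M g p v) * gv r p v.

Variables p0 v0 : R.
Hypothesis dom0 : in_dom P p0 v0.

Let t0 := tfun M g p0 v0.
Let c := / (lam + t0).
Let a := v0 + c * p0.
Let L s := a - c * s.
Let phi s := tfun M g s (L s).

Let c_pos : 0 < c.
Proof. now apply Rinv_0_lt_compat, denom_pos. Qed.


Let L_in_dom s : 0 <= s <= p0 -> in_dom P s (L s).
Proof.
  intro Hs; destruct dom0; pose proof c_pos; unfold in_dom, L, a; split; [lra|].
  assert (0 <= c * (p0 - s)) by (apply Rmult_le_pos; lra).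
  lra.
Qed.

Let L_pos s : 0 < s < p0 -> 0 < a - c * s.
Proof.
  intro Hs; destruct dom0; pose proof c_pos; unfold a.
  assert (0 < c * (p0 - s)) by (apply Rmult_lt_0_compat; lra).
  lra.
Qed.

Let continuous_on_L F : cont_on_dom P F -> continuous_on_segment 0 p0 (fun s => F s (L s)).
Proof.
  intro HF; destruct dom0; pose proof c_pos.
  apply continuous_on_segment_intro; [lra|]; intros s Hs eps Heps.
  destruct (HF s (L s) (L_in_dom s Hs) eps Heps) as [d [Hd Hclose]].
  exists (d / (c + 1)); split; [apply Rdiv_lt_0_compat; lra|]; intros y Hy Hys.
  apply (Rmult_lt_compat_l (c + 1)) in Hys; [|lra].
  replace ((c + 1) * (d / (c + 1))) with d in Hys by (field; lra).
  pose proof (Rabs_pos (y - s)).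
  apply Hclose; [now apply L_in_dom | nra |].
  unfold L; replace (a - c * y - (a - c * s)) with (- (c * (y - s))) by ring.
  rewrite Rabs_Ropp, Rabs_mult, (Rabs_right c) by lra; nra.
Qed.

Let derivable_g_along_L r s : (r < M)%nat -> 0 < s < p0 ->
  derivable_pt_lim (fun s => g r s (L s)) s ((/ (lam + phi s) - c) * gv r s (L s)).
Proof.
  intros Hr Hs; destruct dom0.
  eapply derivable_pt_lim_eq.
  - apply (derivable_pt_lim_along_line P (g r) (gp r) (gv r));
      [apply g_C1, Hr | exact c_pos | lra | apply L_pos, Hs].
  - rewrite g_pde by (auto; apply L_in_dom; lra); unfold phi, L; ring.
Qed.

Let phi_const s : 0 <= s <= p0 -> phi s = t0.
Proof.
  intro Hs; destruct dom0; pose proof c_pos.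
  set (k := fun s => - sumM M (fun r => gv r s (L s)) / ((lam + phi s) * (lam + t0))).
  enough (phi s - t0 = 0) by lra.
  apply (linear_ode_eq0 0 p0 (fun s => phi s - t0) k); [lra | | | | | easy].
  - intro x; apply continuity_pt_minus; [|apply continuity_pt_const; now intros ??].
    apply continuity_pt_sumM; intros r Hr.
    apply (continuous_on_L (g r)), g_C1, Hr.
  - intro x; unfold k; apply continuity_pt_div.
    + apply continuity_pt_opp, continuity_pt_sumM; intros r Hr.
      apply (continuous_on_L (gv r)), g_C1, Hr.
    + apply continuity_pt_mult; [|apply continuity_pt_const; now intros ??].
      apply continuity_pt_plus; [apply continuity_pt_const; now intros ??|].
      apply continuity_pt_sumM; intros r Hr.
      apply (continuous_on_L (g r)), g_C1, Hr.
    + apply Rgt_not_eq, Rmult_lt_0_compat; [apply denom_pos, L_in_dom|apply denom_pos, dom0].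
      now apply clamp_in.
  - intros x Hx; eapply derivable_pt_lim_eq.
    + apply derivable_pt_lim_minus; [|apply derivable_pt_lim_const].
      apply (derivable_pt_lim_sumM M (fun r s => g r s (L s))
               (fun r s => (/ (lam + phi s) - c) * gv r s (L s))); intros r Hr.
      now apply derivable_g_along_L.
    + assert (0 < lam + phi x) by (apply denom_pos, L_in_dom; lra).
      assert (0 < lam + t0) by now apply denom_pos.
      rewrite sumM_scal_l; unfold k, c; field; split; lra.
  - cbv beta; unfold phi, L, a, t0; replace (v0 + c * p0 - c * p0) with v0 by ring; ring.
Qed.

Lemma g_const_along_characteristic r : (r < M)%nat ->
  g r p0 v0 = g r 0 (v0 + p0 / (lam + tfun M g p0 v0)).
Proof.
  intro Hr; destruct dom0.
  replace (v0 + p0 / (lam + tfun M g p0 v0)) with (L 0) by (unfold L, a, c, t0, Rdiv; ring).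
  replace v0 with (L p0) at 1 by (unfold L, a; ring).
  symmetry; apply (eq_of_deriv_zero 0 p0 (fun s => g r s (L s))); [lra | |].
  - apply (continuous_on_L (g r)), g_C1, Hr.
  - intros s Hs; eapply derivable_pt_lim_eq; [now apply derivable_g_along_L|].
    rewrite phi_const by lra; unfold c; ring.
Qed.

End Characteristic.

Theorem proposition2 (M : nat) (lam : R) (lams : nat -> R) (P : R)
  (g gp gv : nat -> R -> R -> R) :
  0 <= lam ->
  (forall r, (r < M)%nat -> 0 < lams r) ->
  0 < P ->
  (forall r, (r < M)%nat -> C1_on P (g r) (gp r) (gv r)) ->
  (forall p v, in_dom P p v -> 0 < lam + tfun M g p v) ->
  (forall r p v, (r < M)%nat -> in_dom P p v ->
     gp r p v = / (lam + tfun M g p v) * gv r p v) ->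
  (forall r v, (r < M)%nat -> 0 <= v -> g r 0 v = / (/ lams r + v)) ->
  (forall r p v, (r < M)%nat -> in_dom P p v ->
     g r p v = / (/ lams r + v + p / (lam + sumM M (fun c => g c p v)))) /\
  (forall p v, in_dom P p v ->
     tfun M g p v = sumM M (fun r => / (/ lams r + v + p / (lam + tfun M g p v)))).
Proof.
  intros _ _ _ g_C1 denom_pos g_pde g_init.
  assert (g_formula : forall r p v, (r < M)%nat -> in_dom P p v ->
            g r p v = / (/ lams r + v + p / (lam + tfun M g p v))).
  { intros r p v Hr Hd.
    rewrite (g_const_along_characteristic M lam P g gp gv g_C1 denom_pos g_pde p v Hd r Hr).
    assert (0 <= p / (lam + tfun M g p v)).
    { pose proof (denom_pos p v Hd); destruct Hd as [[Hp _] _].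
      apply Rmult_le_pos; [easy | now apply Rlt_le, Rinv_0_lt_compat]. }
    rewrite g_init by (auto; destruct Hd; lra).
    f_equal; ring. }
  split; [exact g_formula|].
  intros p v Hd; apply sumM_ext; intros r Hr; now apply g_formula.
Qed.
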